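(* Let $S$ be a HeyVL program and let $S'$ be a subprogram obtained from $S$ by only erasing (replacing by $\mathtt{skip}$) occurrences of statements that are reductive. Then for all expectations $X,Y$: if $\not\models\{X\}\,S'\,\{Y\}$, then $S'$ is an error-witnessing slice of $S$ with respect to $(X,Y)$. Moreover, $\mathrm{vp}[S](Z)\preceq\mathrm{vp}[S'](Z)$ for every expectation $Z$.
   Context: Expectations are functions $X:\mathsf{States}\to[0,\infty]$ on program states, ordered pointwise ($X\preceq Y$ iff $X(\sigma)\le Y(\sigma)$ for all $\sigma$). HeyVL statements and their verification pre-expectation transformer $\mathrm{vp}[S]$ (mapping expectations to expectations) are: probabilistic assignment $x :\approx p_1\cdot t_1+\dots+p_n\cdot t_n$ (a finite-support distribution) with $\mathrm{vp}(X)=\sum_i p_i\cdot X[x/t_i]$, deterministic assignment $x:=a$ with $\mathrm{vp}(X)=X[x/a]$; $\mathtt{reward}\ a$: $X+a$; $S_1;S_2$: $\mathrm{vp}[S_1](\mathrm{vp}[S_2](X))$; demonic choice $\mathtt{if}(\sqcap)\{S_1\}\mathtt{else}\{S_2\}$: $\min(\mathrm{vp}[S_1](X),\mathrm{vp}[S_2](X))$; angelic choice $\mathtt{if}(\sqcup)$: the pointwise max; $\mathtt{assert}\ Y$: $\min(Y,X)$; $\mathtt{coassert}\ Y$: $\max(Y,X)$; $\mathtt{assume}\ Y$: the expectation equal to $\infty$ where $Y\le X$ and to $X$ elsewhere; $\mathtt{coassume}\ Y$: equal to $0$ where $Y\ge X$ and to $X$ elsewhere; $\mathtt{havoc}\ x$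 / $\mathtt{cohavoc}\ x$: pointwise infimum / supremum of $X$ over all values of $x$; $\mathtt{validate}$: $\infty$ where $X=\infty$, $0$ elsewhere; $\mathtt{covalidate}$: $0$ where $X=0$, $\infty$ elsewhere. $\mathtt{skip}$ has $\mathrm{vp}[\mathtt{skip}](X)=X$. A statement $S$ is reductive if $\mathrm{vp}[S](X)\preceq X$ for all $X$. For a state $\sigma$, write $\sigma\models\{X\}S\{Y\}$ iff $X(\sigma)\le\mathrm{vp}[S](Y)(\sigma)$, and $\models\{X\}S\{Y\}$ iff this holds for all $\sigma$ (i.e. $X\preceq\mathrm{vp}[S](Y)$). A subprogram $P$ of $S$ is an error-witnessing slice of $S$ w.r.t. $(X,Y)$ if (1) $\not\models\{X\}P\{Y\}$ and (2) for every state $\sigma'$, $\sigma'\not\models\{X\}P\{Y\}$ implies $\sigma'\not\models\{X\}S\{Y\}$. *)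

(* expectations valued in extended reals \bar R (R : realType),
   restricted to nonnegative ones by explicit hypotheses. *)
From HB Require Import structures.
From mathcomp Require Import all_boot all_order all_algebra.
From mathcomp Require Import boolp classical_sets reals constructive_ereal ereal.
Set Implicit Arguments. Unset Strict Implicit. Unset Printing Implicit Defensive.
Import Order.TTheory GRing.Theory Num.Theory.
Local Open Scope ring_scope.
Local Open Scope ereal_scope.
Local Open Scope classical_set_scope.

Section HeyVL.
Context (R : realType) (Var : eqType) (Val : Type).

Definition state := Var -> Val.
Definition expect := state -> \bar R.

Definition upd (s : state) (x : Var) (v : Val) : state :=
  fun y => if y == x then v else s y.

Inductive stmt :=
| Skip
| PAssign (x : Var) (d : seq (R * (state -> Val)))   (* x :~ p1*t1 + ... + pn*tn *)
| Assign (x : Var) (a : state -> Val)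
| Reward (a : expect)
| Seq (S1 S2 : stmt)
| Demonic (S1 S2 : stmt)
| Angelic (S1 S2 : stmt)
| Assert (Y : expect)
| Coassert (Y : expect)
| Assume (Y : expect)
| Coassume (Y : expect)
| Havoc (x : Var)
| Cohavoc (x : Var)
| Validate
| Covalidate.

Definition nonneg (X : expect) : Prop := forall s, 0 <= X s.

Fixpoint wf (S : stmt) : Prop :=
  match S with
  | PAssign _ d => all (fun p => (0 <= p)%R) (map fst d) /\
                   (\sum_(p <- map fst d) p)%R = 1%R
  | Reward a => nonneg a
  | Seq S1 S2 | Demonic S1 S2 | Angelic S1 S2 => wf S1 /\ wf S2
  | Assert Y | Coassert Y | Assume Y | Coassume Y => nonneg Y
  | _ => True
  end.

Fixpoint vp (S : stmt) (X : expect) : expect :=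
  match S with
  | Skip => X
  | PAssign x d => fun s => \sum_(pt <- d) ((pt.1)%:E * X (upd s x (pt.2 s)))
  | Assign x a => fun s => X (upd s x (a s))
  | Reward a => fun s => X s + a s
  | Seq S1 S2 => vp S1 (vp S2 X)
  | Demonic S1 S2 => fun s => mine (vp S1 X s) (vp S2 X s)
  | Angelic S1 S2 => fun s => maxe (vp S1 X s) (vp S2 X s)
  | Assert Y => fun s => mine (Y s) (X s)
  | Coassert Y => fun s => maxe (Y s) (X s)
  | Assume Y => fun s => if Y s <= X s then +oo else X s
  | Coassume Y => fun s => if X s <= Y s then 0 else X s
  | Havoc x => fun s => ereal_inf (range (fun v => X (upd s x v)))
  | Cohavoc x => fun s => ereal_sup (range (fun v => X (upd s x v)))
  | Validate => fun s => if X s == +oo then +oo else 0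
  | Covalidate => fun s => if X s == 0 then 0 else +oo
  end.

Definition le_exp (X Y : expect) : Prop := forall s, X s <= Y s.

Definition reductive (S : stmt) : Prop :=
  forall X, nonneg X -> le_exp (vp S X) X.

Definition sat (s : state) (X : expect) (S : stmt) (Y : expect) : Prop :=
  X s <= vp S Y s.

Definition valid (X : expect) (S : stmt) (Y : expect) : Prop :=
  forall s, sat s X S Y.

Inductive erase (keep : stmt -> Prop) : stmt -> stmt -> Prop :=
| er_refl S : erase keep S S
| er_skip S : keep S -> erase keep S Skip
| er_seq S1 S2 T1 T2 : erase keep S1 T1 -> erase keep S2 T2 ->
    erase keep (Seq S1 S2) (Seq T1 T2)
| er_dem S1 S2 T1 T2 : erase keep S1 T1 -> erase keep S2 T2 ->
    erase keep (Demonic S1 S2) (Demonic T1 T2)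
| er_ang S1 S2 T1 T2 : erase keep S1 T1 -> erase keep S2 T2 ->
    erase keep (Angelic S1 S2) (Angelic T1 T2).

Definition subprogram (P S : stmt) : Prop := erase (fun _ => True) S P.

Definition error_witnessing_slice (S P : stmt) (X Y : expect) : Prop :=
  [/\ subprogram P S,
      ~ valid X P Y &
      forall s, ~ sat s X P Y -> ~ sat s X S Y].

End HeyVL.

From mathcomp Require Import all_boot all_order all_algebra.
From mathcomp Require Import boolp classical_sets reals constructive_ereal ereal.
Import Order.TTheory.

Set Implicit Arguments. Unset Strict Implicit. Unset Printing Implicit Defensive.
Local Open Scope ereal_scope.

(* Erasing a reductive statement replaces its transformer by the identity,
   which is pointwise larger.  Every transformer of a well-formed program is
   monotone on nonnegative expectations, so this enlargement propagates through
   sequencing and choice: vp[S] <= vp[S'].  A state violating {X} S' {Y}, i.e.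
   with vp[S'](Y) < X, therefore also violates {X} S {Y}. *)

Section WeightedSums.
Context (R : realDomainType) (T : Type).
Implicit Types (d : seq (R * T)) (f g : R * T -> \bar R).

Lemma wsume_ge0 d f : all (fun p => 0 <= p)%R (map fst d) ->
  (forall pt, 0 <= f pt) -> 0 <= \sum_(pt <- d) (pt.1)%:E * f pt.
Proof.
move=> + f_ge0; elim: d => [|pt d IHd] /=; first by rewrite big_nil.
by case/andP=> p_ge0 /IHd; rewrite big_cons; apply: adde_ge0; apply: mule_ge0.
Qed.

Lemma lee_wsum d f g : all (fun p => 0 <= p)%R (map fst d) ->
  (forall pt, f pt <= g pt) ->
  \sum_(pt <- d) (pt.1)%:E * f pt <= \sum_(pt <- d) (pt.1)%:E * g pt.
Proof.
move=> + le_fg; elim: d => [|pt d IHd] /=; first by rewrite !big_nil.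
by case/andP=> p_ge0 /IHd; rewrite !big_cons; apply: leeD; apply: lee_wpmul2l.
Qed.

End WeightedSums.

Section Erasure.
Context (R : realType) (Var : eqType) (Val : Type).
Implicit Types (S T P : stmt R Var Val) (X Y Z : expect R Var Val).

Lemma erase_wf keep S T : erase keep S T -> wf S -> wf T.
Proof. by elim=> //= S1 S2 T1 T2 _ IH1 _ IH2 [/IH1 ? /IH2 ?]. Qed.

Lemma erase_subprogram keep S T : erase keep S T -> subprogram T S.
Proof. by elim=> *; constructor. Qed.

Lemma vp_ge0 S X : wf S -> nonneg X -> nonneg (vp S X).
Proof.
elim: S X => /= [|x d|x a|a|S1 IH1 S2 IH2|S1 IH1 S2 IH2|S1 IH1 S2 IH2
  |Y|Y|Y|Y|x|x||] X.
- by [].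
- by case=> d_ge0 _ X_ge0 s; apply: wsume_ge0.
- by move=> _ X_ge0 s.
- by move=> a_ge0 X_ge0 s; apply: adde_ge0.
- by case=> wf1 wf2 X_ge0; apply: IH1 => //; apply: IH2.
- by case=> wf1 wf2 X_ge0 s; rewrite le_min IH1 ?IH2.
- by case=> wf1 wf2 X_ge0 s; rewrite le_max IH1 ?IH2.
- by move=> Y_ge0 X_ge0 s; rewrite le_min Y_ge0 X_ge0.
- by move=> Y_ge0 X_ge0 s; rewrite le_max Y_ge0.
- by move=> _ X_ge0 s; case: ifP.
- by move=> _ X_ge0 s; case: ifP.
- by move=> _ X_ge0 s; apply: le_ereal_inf_tmp => _ [v _ <-].
- by move=> _ X_ge0 s; apply: le_ereal_sup_tmp; exists (X (upd s x (s x))).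
- by move=> _ X_ge0 s; case: ifP.
- by move=> _ X_ge0 s; case: ifP.
Qed.

(* Nonnegativity of X is needed only for coassume, which sends small values to 0. *)
Lemma vp_mono S X Y : wf S -> nonneg X -> le_exp X Y -> le_exp (vp S X) (vp S Y).
Proof.
elim: S X Y => /= [|x d|x a|a|S1 IH1 S2 IH2|S1 IH1 S2 IH2|S1 IH1 S2 IH2
  |Z|Z|Z|Z|x|x||] X Y.
- by [].
- by case=> d_ge0 _ _ XY s; apply: lee_wsum.
- by move=> _ _ XY s.
- by move=> _ _ XY s; apply: leeD2r.
- by case=> wf1 wf2 X_ge0 XY; apply: IH1; [|exact: vp_ge0|exact: IH2].
- by case=> wf1 wf2 X_ge0 XY s; apply: le_min2; [apply: IH1|apply: IH2].
- by case=> wf1 wf2 X_ge0 XY s; apply: le_max2; [apply: IH1|apply: IH2].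
- by move=> _ _ XY s; apply: le_min2.
- by move=> _ _ XY s; apply: le_max2.
- move=> _ _ XY s; case: ifP => ZX; case: ifP => ZY //; last by rewrite leey.
  by rewrite (le_trans ZX (XY s)) in ZY.
- move=> _ X_ge0 XY s; case: ifP => XZ; case: ifP => YZ //.
  + exact: le_trans (X_ge0 s) _.
  + by rewrite (le_trans (XY s) YZ) in XZ.
- move=> _ _ XY s; apply: le_ereal_inf_tmp => _ [v _ <-].
  by apply: ge_ereal_inf; exists (X (upd s x v)); first exists v.
- move=> _ _ XY s; apply: ge_ereal_sup => _ [v _ <-].
  by apply: le_ereal_sup_tmp; exists (Y (upd s x v)); first exists v.
- move=> _ _ XY s; case: ifP => /eqP Xoo; case: ifP => /eqP Yoo //.
  by move: (XY s); rewrite Xoo leye_eq => /eqP.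
- move=> _ X_ge0 XY s; case: ifP => /eqP X0; case: ifP => /eqP Y0 //.
  by case: X0; apply/eqP; rewrite eq_le X_ge0 andbT -Y0 XY.
Qed.

Lemma vp_erase_reductive S T Z : erase (@reductive R Var Val) S T -> wf S ->
  nonneg Z -> le_exp (vp S Z) (vp T Z).
Proof.
move=> E; elim: E Z => /= {S T} [S|S red_S|S1 S2 T1 T2 E1 IH1 _ IH2
  |S1 S2 T1 T2 _ IH1 _ IH2|S1 S2 T1 T2 _ IH1 _ IH2] Z.
- by move=> _ _ s.
- by move=> _; apply: red_S.
- case=> wf1 wf2 Z_ge0 s.
  have S2Z_ge0 := vp_ge0 wf2 Z_ge0.
  apply: le_trans (IH1 _ wf1 S2Z_ge0 s) _.
  exact: vp_mono (erase_wf E1 wf1) S2Z_ge0 (IH2 Z wf2 Z_ge0) s.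
- by case=> wf1 wf2 Z_ge0 s; apply: le_min2; [apply: IH1|apply: IH2].
- by case=> wf1 wf2 Z_ge0 s; apply: le_max2; [apply: IH1|apply: IH2].
Qed.

Lemma error_witnessing_slice_of_le S P X Y : subprogram P S ->
  le_exp (vp S Y) (vp P Y) -> ~ valid X P Y -> error_witnessing_slice S P X Y.
Proof.
move=> subPS le_SP invalid_P; split=> // s violates_P sat_S.
by apply: violates_P; apply: le_trans sat_S (le_SP s).
Qed.

End Erasure.

Theorem theorem2 (R : realType) (Var : eqType) (Val : Type)
    (S S' : stmt R Var Val) :
  wf S -> erase (@reductive R Var Val) S S' ->
  (forall X Y : expect R Var Val, nonneg X -> nonneg Y ->
     ~ valid X S' Y -> error_witnessing_slice S S' X Y) /\
  (forall Z : expect R Var Val, nonneg Z -> le_exp (vp S Z) (vp S' Z)).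
Proof.
move=> wfS E; have le_SS' := vp_erase_reductive E wfS.
split=> // X Y _ Y_ge0; apply: error_witnessing_slice_of_le.
- exact: erase_subprogram E.
- exact: le_SS'.
Qed.
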